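(* Let $\mathcal A$ be a Banach algebra and $M$ a closed two-sided ideal of $\mathcal A$ of codimension one which is not a maximal modular ideal of $\mathcal A$. If $H^1(\mathcal A,M^* )=\{0\}$, then $\mathcal A^2$ is dense in $M$.
   Context: $\mathcal A^2$ is the linear span of $\{ab:a,b\in\mathcal A\}$. A two-sided ideal $M$ is modular if there is $u\in\mathcal A$ with $b-bu\in M$ and $b-ub\in M$ for all $b\in\mathcal A$; a maximal modular ideal is a proper modular ideal that is maximal among proper ideals. $M^*$ is a Banach $\mathcal A$-bimodule with $\langle x,a\cdot f\rangle=\langle xa,f\rangle$, $\langle x,f\cdot a\rangle=\langle ax,f\rangle$; $H^1(\mathcal A,M^* )=\{0\}$ means every derivation $D:\mathcal A\to M^*$ (continuous linear, $D(ab)=a\cdot D(b)+D(a)\cdot b$) is of the form $D(a)=a\cdot f-f\cdot a$ for some $f\in M^*$. *)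

(* Complex Banach algebras over C := R[i]
   (R : realType), possibly non-unital, given by a complete normed C-space
   V together with a multiplication [mul]. *)
From mathcomp Require Import all_boot all_algebra.
From mathcomp Require Import all_classical all_reals all_analysis.
From mathcomp.real_closed Require Export complex.
Export Num.Theory GRing.Theory.

Set Implicit Arguments.
Unset Strict Implicit.
Unset Printing Implicit Defensive.

Local Open Scope ring_scope.
Local Open Scope classical_set_scope.

Section Defs.
Variables (K : numFieldType) (V : normedModType K) (mul : V -> V -> V).

Definition banach_algebra_mul : Prop :=
  (forall a b c, mul a (mul b c) = mul (mul a b) c) /\
  [/\ (forall a b c, mul (a + b) c = mul a c + mul b c),
      (forall a b c, mul a (b + c) = mul a b + mul a c),
      (forall (k : K) a b, mul (k *: a) b = k *: mul a b),
      (forall (k : K) a b, mul a (k *: b) = k *: mul a b) &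
      (forall a b, `|mul a b| <= `|a| * `|b|)].

Definition subspace (M : set V) : Prop :=
  [/\ M 0, (forall x y, M x -> M y -> M (x + y)) &
      (forall (k : K) x, M x -> M (k *: x))].

Definition two_sided_ideal (M : set V) : Prop :=
  subspace M /\ (forall a m, M m -> M (mul a m) /\ M (mul m a)).

Definition closed_ideal (M : set V) : Prop := two_sided_ideal M /\ closed M.

Definition codim_one (M : set V) : Prop :=
  exists u, ~ M u /\ forall v, exists (k : K) (m : V), M m /\ v = k *: u + m.

Definition modular_ideal (M : set V) : Prop :=
  two_sided_ideal M /\
  exists u, forall b, M (b - mul b u) /\ M (b - mul u b).

Definition proper (M : set V) : Prop := M <> [set: V].

Definition maximal_modular_ideal (M : set V) : Prop :=
  [/\ modular_ideal M, proper M &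
      forall J, two_sided_ideal J -> proper J -> M `<=` J -> J = M].

Definition square_span : set V :=
  [set z | exists (n : nat) (a b : 'I_n -> V), z = \sum_(i < n) mul (a i) (b i)].

(* Elements of the dual M^* are represented by functions f : V -> K of which
   only the restriction to M matters: linear and bounded on M. *)
Definition dual_elt (M : set V) (f : V -> K) : Prop :=
  [/\ (forall x y, M x -> M y -> f (x + y) = f x + f y),
      (forall (k : K) x, M x -> f (k *: x) = k * f x) &
      exists C : K, forall x, M x -> `|f x| <= C * `|x|].

(* A derivation D : A -> M^*, represented as D a x = <x, D(a)>.
   The module actions are <x, a.f> = <xa, f> and <x, f.a> = <ax, f>, so
   D(ab) = a.D(b) + D(a).b reads <x,D(ab)> = <xa, D(b)> + <bx, D(a)>. *)
Definition derivation (M : set V) (D : V -> V -> K) : Prop :=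
  [/\ (forall a, dual_elt M (D a)),
      (forall a b x, M x -> D (a + b) x = D a x + D b x),
      (forall (k : K) a x, M x -> D (k *: a) x = k * D a x),
      (exists C : K, forall a x, M x -> `|D a x| <= C * `|a| * `|x|) &
      (forall a b x, M x -> D (mul a b) x = D b (mul x a) + D a (mul b x))].

(* inner derivation: D(a) = a.f - f.a for some f in M^* *)
Definition inner_derivation (M : set V) (D : V -> V -> K) : Prop :=
  exists f, dual_elt M f /\
    forall a x, M x -> D a x = f (mul x a) - f (mul a x).

Definition H1_dual_trivial (M : set V) : Prop :=
  forall D, derivation M D -> inner_derivation M D.

Definition dense_in (S M : set V) : Prop := S `<=` M /\ M `<=` closure S.

End Defs.

(* The inclusion of A^2 in M is algebraic: write A = C u + M; if u^2 were not
   in M, then u^2 = g u mod M with g <> 0 and g^-1 u would be a modular unit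
   for M, which, having codimension one, would then be maximal modular.  So
   u^2 is in M and hence every product is.
   For density, suppose x0 in M is not in the closure of A^2.  Hahn-Banach
   (real, by Zorn's lemma on dominated partial graphs, then complexified)
   gives a bounded functional psi vanishing on A^2 with psi x0 <> 0.  As psi
   kills all products, D a = psi(a) psi|_M is a bounded derivation into M^*.
   An inner derivation satisfies <x, D x> = f(x x) - f(x x) = 0 for x in M,
   while <x0, D x0> = psi(x0)^2 <> 0. *)

From HB Require Import structures.
From Pilot Require Import Defs.
From mathcomp Require Import all_boot all_algebra.
From mathcomp Require Import all_classical all_reals all_analysis.
From mathcomp.real_closed Require Import complex.
From mathcomp Require Import lra.
Import mathcomp.order.order.Order.TTheory GRing.Theory Num.Theory.

Set Implicit Arguments.
Unset Strict Implicit.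
Unset Printing Implicit Defensive.

Local Open Scope ring_scope.
Local Open Scope complex_scope.
Local Open Scope classical_set_scope.

Section HahnBanach.
Variables (R : realType) (V : lmodType R) (p : V -> R).
Hypothesis pD : forall x y, p (x + y) <= p x + p y.
Hypothesis pZ : forall (r : R) x, 0 <= r -> p (r *: x) = r * p x.

Definition dominated_graph (G : set (V * R)) : Prop :=
  [/\ G (0, 0),
      (forall x a b, G (x, a) -> G (x, b) -> a = b),
      (forall x y a b, G (x, a) -> G (y, b) -> G (x + y, a + b)),
      (forall r x a, G (x, a) -> G (r *: x, r * a)) &
      (forall x a, G (x, a) -> a <= p x)].

Lemma dominated_graph_local U : U (0, 0) ->
    (forall z1 z2, U z1 -> U z2 ->
       exists2 H, dominated_graph H & [/\ H `<=` U, H z1 & H z2]) ->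
  dominated_graph U.
Proof.
move=> U0 loc; split => // [x a b Ua Ub|x y a b Ua Ub|r x a Ua|x a Ua].
- by have [H [_ Hfun _ _ _] [_ H1 H2]] := loc _ _ Ua Ub; exact: Hfun H1 H2.
- by have [H [_ _ HD _ _] [HU H1 H2]] := loc _ _ Ua Ub; exact/HU/HD.
- by have [H [_ _ _ HZ _] [HU H1 _]] := loc _ _ Ua Ua; exact/HU/HZ.
- by have [H [_ _ _ _ Hp] [_ H1 _]] := loc _ _ Ua Ua; exact: Hp.
Qed.

Lemma dominated_graphB {G x y a b} : dominated_graph G ->
  G (x, a) -> G (y, b) -> G (x - y, a - b).
Proof.
case=> _ _ GD GZ _ Gx /(GZ (-1)); rewrite scaleN1r mulN1r.
exact: GD.
Qed.

Lemma extension_value G v : dominated_graph G -> exists c : R,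
  (forall x a, G (x, a) -> a - p (x - v) <= c) /\
  (forall y b, G (y, b) -> c <= p (y + v) - b).
Proof.
case=> G0 _ GD _ Gp.
have sep x a y b : G (x, a) -> G (y, b) -> a - p (x - v) <= p (y + v) - b.
  move=> Gx Gy; have := Gp _ _ (GD _ _ _ _ Gx Gy).
  have := pD (x - v) (y + v); rewrite addrACA addNr addr0; lra.
pose E := [set z.2 - p (z.1 - v) | z in G].
have E0 : E !=set0 by exists (0 - p (0 - v)), (0, 0).
have Eub : ubound E (p (0 + v) - 0) by move=> _ [[x a] Gx <-]; exact: sep.
exists (sup E); split => [x a Gx|y b Gy].
- by apply: ub_le_sup; [exists (p (0 + v) - 0) | exists (x, a)].
- by apply: ge_sup => // _ [[x a] Gx <-]; exact: sep.
Qed.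

Lemma extension_dominated G v c x a t : dominated_graph G ->
    (forall x a, G (x, a) -> a - p (x - v) <= c) ->
    (forall y b, G (y, b) -> c <= p (y + v) - b) ->
  G (x, a) -> a + t * c <= p (x + t *: v).
Proof.
case=> _ _ _ GZ Gp clb cub Gx.
have [t0|t0|->] := ltgtP t 0; last by rewrite mul0r scale0r !addr0; exact: Gp.
- pose s := - t; have s0 : 0 < s by rewrite oppr_gt0.
  have := clb _ _ (GZ s^-1 _ _ Gx).
  have -> : x + t *: v = s *: (s^-1 *: x - v).
    by rewrite scalerBr scalerA divff ?gt_eqF // scale1r scaleNr opprK.
  rewrite pZ; last exact: ltW.
  move=> h; have := ler_wpM2l (ltW s0) h.
  rewrite mulrBr mulrA divff ?gt_eqF // mul1r /s; lra.
- have := cub _ _ (GZ t^-1 _ _ Gx).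
  have -> : x + t *: v = t *: (t^-1 *: x + v).
    by rewrite scalerDr scalerA divff ?gt_eqF // scale1r.
  rewrite pZ; last exact: ltW.
  move=> h; have := ler_wpM2l (ltW t0) h.
  rewrite mulrBr mulrA divff ?gt_eqF // mul1r; lra.
Qed.

Lemma dominated_graph_extend G v : dominated_graph G -> ~ (exists a, G (v, a)) ->
  exists2 G', dominated_graph G' & G `<` G'.
Proof.
move=> domG nGv; have [G0 Gfun GD GZ Gp] := domG.
have [c [clb cub]] := extension_value v domG.
pose G' := [set z | exists t x a, G (x, a) /\ z = (x + t *: v, a + t * c)].
have G'uniq t x a t' x' a' : G (x, a) -> G (x', a') ->
    x + t *: v = x' + t' *: v -> t = t' /\ x = x'.
  move=> Gx Gx' e; suff tt' : t = t' by split=> //; move: e; rewrite tt' => /addIr.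
  have [//|ntt'] := eqVneq t t'; exfalso; apply: nGv.
  have /(GZ (t - t')^-1) := dominated_graphB domG Gx' Gx.
  have -> : x' - x = (t - t') *: v.
    have -> : x' - x = (x' + t' *: v) - (x + t' *: v) by rewrite opprD addrACA subrr addr0.
    by rewrite -e opprD addrACA subrr add0r scalerBl.
  rewrite scalerA mulVf ?scale1r; last by rewrite subr_eq0.
  by move=> Gv; eexists; exact: Gv.
exists G'; last split.
- split.
  + by exists 0, 0, 0; rewrite scale0r mul0r !addr0.
  + move=> _ a b [t [x [a1 [Gx [-> ->]]]]] [t' [x' [a1' [Gx' []]]]].
    by move=> /(G'uniq _ _ _ _ _ _ Gx Gx') [<- xx'] ->; rewrite (Gfun x a1 a1') // xx'.
  + move=> _ _ _ _ [t [x [a [Gx [-> ->]]]]] [s [y [b [Gy [-> ->]]]]].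
    exists (t + s), (x + y), (a + b); split; first exact: GD.
    by rewrite scalerDl mulrDl; congr pair; rewrite addrACA.
  + move=> r _ _ [t [x [a [Gx [-> ->]]]]].
    exists (r * t), (r *: x), (r * a); split; first exact: GZ.
    by rewrite scalerDr scalerA mulrDr mulrA.
  + move=> _ _ [t [x [a [Gx [-> ->]]]]].
    exact: extension_dominated domG clb cub Gx.
- by move=> [x a] Gx; exists 0, x, a; rewrite scale0r mul0r !addr0.
- move=> /(_ (v, c)) G'G; apply: nGv; exists c; apply: G'G.
  by exists 1, 0, 0; rewrite scale1r mul1r !add0r.
Qed.

Theorem hahn_banach G0 : dominated_graph G0 -> exists l : V -> R,
  [/\ (forall x a, G0 (x, a) -> l x = a), (forall x y, l (x + y) = l x + l y),
      (forall r x, l (r *: x) = r * l x) & (forall x, l x <= p x)].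
Proof.
move=> domG0; pose P H := dominated_graph (G0 `|` H).
have chainP F : F `<=` P -> total_on F subset -> P (\bigcup_(X in F) X).
  move=> FP Ftot; apply: dominated_graph_local; first by left; case: domG0.
  have sub X : F X -> G0 `|` X `<=` G0 `|` \bigcup_(X in F) X.
    by move=> FX z [?|?]; [left|right; exists X].
  move=> z1 z2 [G1|[X FX X1]] [G2|[Y FY Y2]].
  - by exists G0 => //; split => // z; left.
  - by exists (G0 `|` Y); [exact: FP|split; [exact: sub|left|right]].
  - by exists (G0 `|` X); [exact: FP|split; [exact: sub|right|left]].
  - have [XY|YX] := Ftot _ _ FX FY.
    + by exists (G0 `|` Y); [exact: FP|split; [exact: sub|right; exact: XY|right]].
    + by exists (G0 `|` X); [exact: FP|split; [exact: sub|right|right; exact: YX]].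
have [A [PA maxA]] := Zorn_bigcup chainP.
have total v : exists a, (G0 `|` A) (v, a).
  apply: contrapT => nv.
  have [G' domG' [sG' nsG']] := dominated_graph_extend PA nv.
  have AG' : A `<` G'.
    by split=> [z Az|G'A]; [apply: sG'; right | apply: nsG' => z /G'A; right].
  apply: (maxA G' AG'); rewrite /P setUidr //.
  by apply: subset_trans sG'; exact: subsetUl.
have [l Hl] := choice total; have [_ Gfun GD GZ Gp] := PA.
exists l; split => [x a G0x|x y|r x|x]; first by apply: Gfun (Hl x) _; left.
- by apply: Gfun (Hl _) _; apply: GD.
- by apply: Gfun (Hl _) _; apply: GZ.
- exact: Gp (Hl x).
Qed.

End HahnBanach.

Definition realified {R : realType} (V : lmodType R[i]) : Type := V.

Section Realified.
Variables (R : realType) (V : lmodType R[i]).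

HB.instance Definition _ := GRing.Zmodule.on (realified V).

Let rscale (r : R) (x : realified V) : realified V := r%:C *: (x : V).

Let rscaleA r s x : rscale r (rscale s x) = rscale (r * s) x.
Proof. by rewrite /rscale scalerA rmorphM. Qed.
Let rscale1 : left_id 1 rscale.
Proof. by move=> x; rewrite /rscale rmorph1 scale1r. Qed.
Let rscaleDr : right_distributive rscale +%R.
Proof. by move=> r x y; rewrite /rscale scalerDr. Qed.
Let rscaleDl x : {morph rscale^~ x : r s / r + s}.
Proof. by move=> r s; rewrite /rscale rmorphD scalerDl. Qed.

HB.instance Definition _ :=
  GRing.Zmodule_isLmodule.Build R (realified V) rscaleA rscale1 rscaleDr rscaleDl.

Lemma realifiedZE (r : R) (x : realified V) : r *: x = r%:C *: (x : V).
Proof. by []. Qed.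

End Realified.

Section Complexify.
Variables (R : realType) (V : lmodType R[i]) (l : V -> R).
Hypothesis lD : forall x y, l (x + y) = l x + l y.
Hypothesis lZ : forall (r : R) x, l (r%:C *: x) = r * l x.

Definition complexify (x : V) : R[i] := (l x)%:C - 'i * (l ('i *: x))%:C.

Lemma complexifyD x y : complexify (x + y) = complexify x + complexify y.
Proof. by rewrite /complexify scalerDr !lD !rmorphD mulrDr opprD addrACA. Qed.

Lemma complexifyRZ (r : R) x : complexify (r%:C *: x) = r%:C * complexify x.
Proof.
have iZ : 'i *: (r%:C *: x) = r%:C *: ('i *: x) by rewrite !scalerA mulrC.
by rewrite /complexify iZ !lZ !rmorphM mulrBr; congr (_ - _); exact: mulrCA.
Qed.

Lemma complexifyiZ x : complexify ('i *: x) = 'i * complexify x.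
Proof.
have liiZ : l ('i *: ('i *: x)) = - l x.
  by rewrite scalerA -expr2 sqr_i; have := lZ (-1) x; rewrite rmorphN1 mulN1r.
rewrite /complexify liiZ mulrBr rmorphN mulrN opprK mulrA -expr2 sqr_i.
by rewrite mulN1r opprK addrC.
Qed.

Lemma complexifyZ k x : complexify (k *: x) = k * complexify x.
Proof.
rewrite [k]complexE scalerDl -scalerA complexifyD complexifyiZ !complexifyRZ.
by rewrite mulrDl mulrA.
Qed.

End Complexify.

Lemma normcR (R : realType) (r : R) : `|r%:C| = `|r|%:C.
Proof. by rewrite normc_def /= expr0n addr0 sqrtr_sqr. Qed.

Lemma normci (R : realType) : `|'i| = 1 :> R[i].
Proof. by rewrite normc_def /= expr0n expr1n add0r sqrtr1. Qed.

Section Separation.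
Variables (R : realType) (V : normedModType R[i]).

Definition real_norm (x : V) : R := complex.Re `|x|.

Lemma real_normE x : `|x| = (real_norm x)%:C.
Proof. by rewrite /real_norm complex.RRe_real // ger0_real. Qed.

Lemma real_norm_ge0 x : 0 <= real_norm x.
Proof. by rewrite -ler0c -real_normE. Qed.

Lemma real_normN x : real_norm (- x) = real_norm x.
Proof. by rewrite /real_norm normrN. Qed.

Lemma real_normD x y : real_norm (x + y) <= real_norm x + real_norm y.
Proof. by rewrite -lecR rmorphD /= -!real_normE; exact: ler_normD. Qed.

Lemma real_normZ k x : (real_norm (k *: x))%:C = `|k| * (real_norm x)%:C.
Proof. by rewrite -!real_normE normrZ. Qed.

Lemma real_normRZ (r : R) x : 0 <= r -> real_norm (r%:C *: x) = r * real_norm x.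
Proof. by move=> r0; apply: complexI; rewrite real_normZ rmorphM normcR ger0_norm. Qed.

Lemma real_normiZ x : real_norm ('i *: x) = real_norm x.
Proof. by apply: complexI; rewrite real_normZ normci mul1r. Qed.

Lemma not_closure_dist (S : set V) x0 : ~ closure S x0 ->
  exists2 d : R, 0 < d & forall s, S s -> d <= real_norm (x0 - s).
Proof.
move=> nSx0; have [B nB SB] : exists2 B, nbhs x0 B & ~ (S `&` B !=set0).
  by apply: contrapT => h; apply: nSx0 => B nB; apply: contrapT => ?; apply: h; exists B.
have [e xeB] := nbhs_ex nB; set d := complex.Re e%:num.
have ed : e%:num = d%:C by rewrite /d complex.RRe_real // gtr0_real.
exists d; first by rewrite -ltcR rmorph0 /= -ed.
move=> s Ss; rewrite leNgt; apply/negP => sx0; apply: SB; exists s; split => //.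
by apply: xeB; rewrite -ball_normE /= real_normE ed ltcR.
Qed.

Lemma dist_graph_dominated (S : set V) x0 d : Defs.subspace S -> 0 < d ->
    (forall s, S s -> d <= real_norm (x0 - s)) ->
  dominated_graph (real_norm : realified V -> R)
    [set z | exists s (t : R), S s /\ z = (s + t%:C *: x0, d * t)].
Proof.
move=> [S0 SD SZ] d0 dist.
have SN s : S s -> S (- s) by move=> /(SZ (-1)); rewrite scaleN1r.
have nSx0 : ~ S x0 by move=> /dist; rewrite subrr /real_norm normr0 /= leNgt d0.
split.
- by exists 0, 0; rewrite rmorph0 scale0r addr0 mulr0.
- move=> _ a b [s [t [Ss [-> ->]]]] [s' [t' [Ss' []]]] e ->.
  have [-> //|tt'] := eqVneq t t'; exfalso; apply: nSx0.
  have e' : (t - t')%:C *: x0 = s' - s.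
    have -> : s' - s = (s' + t'%:C *: x0) - (s + t'%:C *: x0).
      by rewrite opprD addrACA subrr addr0.
    by rewrite -e opprD addrACA subrr add0r rmorphB scalerBl.
  have -> : x0 = ((t - t')^-1)%:C *: (s' - s).
    by rewrite -e' scalerA -rmorphM mulVf ?rmorph1 ?scale1r // subr_eq0.
  by apply/SZ/SD/SN.
- move=> _ _ _ _ [s [t [Ss [-> ->]]]] [s' [t' [Ss' [-> ->]]]].
  exists (s + s'), (t + t'); split; first exact: SD.
  by rewrite rmorphD scalerDl mulrDr; congr pair; rewrite addrACA.
- move=> r _ _ [s [t [Ss [-> ->]]]].
  exists (r%:C *: s), (r * t); split; first exact: SZ.
  by rewrite realifiedZE scalerDr scalerA rmorphM mulrCA.
- move=> _ _ [s [t [Ss [-> ->]]]].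
  have [t0|t0] := leP t 0.
    by apply: le_trans (real_norm_ge0 _); rewrite pmulr_rle0.
  have -> : s + t%:C *: x0 = t%:C *: (x0 - - ((t^-1)%:C *: s)).
    by rewrite opprK scalerDr scalerA -rmorphM divff ?gt_eqF // rmorph1 scale1r addrC.
  rewrite real_normRZ ?(ltW t0) // mulrC.
  by apply: ler_wpM2l; [exact: ltW | exact/dist/SN/SZ].
Qed.

Lemma complexify_norm_le (l : V -> R) x :
  (forall x, `|l x| <= real_norm x) -> `|complexify l x| <= 2 * `|x|.
Proof.
move=> l_le; apply: le_trans (ler_normB _ _) _.
rewrite normrM normci mul1r !normcR mulr_natl mulr2n real_normE.
by apply: lerD; rewrite lecR // -(real_normiZ x).
Qed.

Lemma separation (S : set V) x0 : Defs.subspace S -> ~ closure S x0 ->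
  exists psi : V -> R[i],
  [/\ (forall x y, psi (x + y) = psi x + psi y), (forall k x, psi (k *: x) = k * psi x),
      (forall x, `|psi x| <= 2 * `|x|), (forall s, S s -> psi s = 0) & psi x0 != 0].
Proof.
move=> sS nSx0; have [S0 _ SZ] := sS; have [d d0 dist] := not_closure_dist nSx0.
have [l [lG0 lD lZ l_le]] :=
  @hahn_banach _ (realified V) _ real_normD real_normRZ _ (dist_graph_dominated sS d0 dist).
have lN x : l (- x) = - l x.
  by have := lZ (-1) x; rewrite realifiedZE rmorphN1 scaleN1r mulN1r.
have l_abs x : `|l x| <= real_norm x.
  by rewrite ler_norml l_le andbT lerNl -lN -(real_normN x); exact: l_le.
have lS s : S s -> l s = 0.
  by move=> Ss; apply: lG0; exists s, 0; rewrite rmorph0 scale0r addr0 mulr0.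
have lx0 : l x0 = d by apply: lG0; exists 0, 1; rewrite rmorph1 scale1r add0r mulr1.
exists (complexify l); split.
- exact: complexifyD.
- exact: complexifyZ.
- by move=> x; apply: complexify_norm_le.
- by move=> s Ss; rewrite /complexify !lS ?mulr0 ?subr0 //; exact: SZ.
- apply/eqP => /(congr1 (@complex.Re R)); rewrite /complexify lx0 /=.
  by rewrite mul0r mulr0 !subr0 => /eqP; rewrite gt_eqF.
Qed.

End Separation.

Section BanachAlgebra.
Variables (K : numFieldType) (V : normedModType K) (mul : V -> V -> V).
Hypothesis bam : banach_algebra_mul mul.

Lemma bmulZl k a b : mul (k *: a) b = k *: mul a b.
Proof. by case: bam => _ []. Qed.

Lemma bmulZr k a b : mul a (k *: b) = k *: mul a b.
Proof. by case: bam => _ []. Qed.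

Lemma bmulBl a b c : mul (a - b) c = mul a c - mul b c.
Proof. by case: bam => _ [mulDl _ _ _ _]; rewrite mulDl -scaleN1r bmulZl scaleN1r. Qed.

Lemma bmulBr a b c : mul a (b - c) = mul a b - mul a c.
Proof. by case: bam => _ [_ mulDr _ _ _]; rewrite mulDr -scaleN1r bmulZr scaleN1r. Qed.

Lemma mul_square_span a b : square_span mul (mul a b).
Proof. by exists 1%N, (fun _ => a), (fun _ => b); rewrite big_ord1. Qed.

Lemma square_span_subspace : Defs.subspace (square_span mul).
Proof.
split.
- by exists 0%N, (fun _ => 0), (fun _ => 0); rewrite big_ord0.
- move=> _ _ [n [a [b ->]]] [m [a' [b' ->]]].
  pose cat (f : 'I_n -> V) (g : 'I_m -> V) i :=
    match fintype.split i with inl j => f j | inr j => g j end.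
  exists (n + m)%N, (cat a a'), (cat b b'); rewrite big_split_ord /=.
  by congr (_ + _); apply: eq_bigr => i _; rewrite /cat ?(unsplitK (inl _)) ?(unsplitK (inr _)).
- move=> k _ [n [a [b ->]]]; exists n, (fun i => k *: a i), b.
  by rewrite scaler_sumr; apply: eq_bigr => i _; rewrite bmulZl.
Qed.

Section Ideal.
Variable M : set V.
Hypothesis idM : two_sided_ideal mul M.

Lemma idealD x y : M x -> M y -> M (x + y).
Proof. by case: idM => [[_ + _] _]; apply. Qed.

Lemma idealZ k x : M x -> M (k *: x).
Proof. by case: idM => [[_ _ +] _]; apply. Qed.

Lemma ideal_sym x y : M (x - y) -> M (y - x).
Proof. by move=> /(idealZ (-1)); rewrite scaleN1r opprB. Qed.

Lemma ideal_trans x y z : M (x - y) -> M (y - z) -> M (x - z).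
Proof. by move=> Mxy /(idealD Mxy); rewrite addrA subrK. Qed.

Lemma ideal_mull a x : M x -> M (mul a x).
Proof. by move=> Mx; case: idM => _ /(_ a x Mx) []. Qed.

Lemma ideal_mulr a x : M x -> M (mul x a).
Proof. by move=> Mx; case: idM => _ /(_ a x Mx) []. Qed.

Lemma square_span_sub : (forall a b, M (mul a b)) -> square_span mul `<=` M.
Proof.
move=> Mmul _ [n [a [b ->]]]; apply: (big_ind M) => //; last exact: idealD.
by case: idM => -[].
Qed.

Lemma ideal_mul_coef u a b ka kb : M (a - ka *: u) -> M (b - kb *: u) ->
  M (mul a b - (ka * kb) *: mul u u).
Proof.
move=> Ma Mb.
have -> : mul a b - (ka * kb) *: mul u u = mul (a - ka *: u) b + ka *: mul u (b - kb *: u).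
  by rewrite bmulBl bmulBr bmulZl bmulZr scalerBr scalerA addrA subrK.
by apply: idealD; [exact: ideal_mulr | exact/idealZ/ideal_mull].
Qed.

Section CodimOne.
Variable u : V.
Hypothesis Mcoef : forall v, exists k, M (v - k *: u).

Lemma codim_one_maximal J : Defs.subspace J -> Defs.proper J -> M `<=` J -> J = M.
Proof.
move=> [_ JD JZ] pJ MJ; apply/seteqP; split => // j Jj; apply: contrapT => Mj.
have [k Mjk] := Mcoef j.
have k0 : k != 0 by apply/eqP => k0; apply: Mj; move: Mjk; rewrite k0 scale0r subr0.
have Ju : J u.
  have /(JZ k^-1) : J (j - (j - k *: u)) by apply: JD; rewrite // -scaleN1r; apply/JZ/MJ.
  by rewrite opprB addrC subrK scalerA mulVf // scale1r.
apply: pJ; apply/seteqP; split => // v _; have [kv Mv] := Mcoef v.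
by rewrite -(subrK (kv *: u) v); apply: JD; [exact: MJ | exact: JZ].
Qed.

Lemma codim_one_modular : ~ M (mul u u) -> modular_ideal mul M.
Proof.
move=> Muu; split => //; have [g Mg] := Mcoef (mul u u).
have g0 : g != 0 by apply/eqP => g0; apply: Muu; move: Mg; rewrite g0 scale0r subr0.
exists (g^-1 *: u) => b; have [kb Mb] := Mcoef b.
have Me : M (g^-1 *: u - g^-1 *: u) by rewrite subrr; case: idM => -[].
have Muu_u : M ((kb / g) *: mul u u - kb *: u).
  by have := idealZ (kb / g) Mg; rewrite scalerBr scalerA mulfVK.
have Mb' := ideal_sym Mb.
split; apply: ideal_sym.
- exact: ideal_trans (ideal_trans (ideal_mul_coef Mb Me) Muu_u) Mb'.
- by apply: ideal_trans (ideal_trans _ Muu_u) Mb'; rewrite mulrC; exact: ideal_mul_coef.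
Qed.

End CodimOne.

Lemma codim_one_mul_mem : codim_one M -> ~ maximal_modular_ideal mul M ->
  forall a b, M (mul a b).
Proof.
move=> [u [Mu Mdec]] nmax a b.
have Mcoef v : exists k, M (v - k *: u).
  by have [k [m [Mm ->]]] := Mdec v; exists k; rewrite addrC addKr.
have Muu : M (mul u u).
  apply: contrapT => Muu; apply: nmax; split; first exact: codim_one_modular Muu.
    by move=> MT; apply: Mu; rewrite MT.
  by move=> J [sJ _]; exact: codim_one_maximal.
have [[ka Ma] [kb Mb]] := (Mcoef a, Mcoef b).
by have := idealD (ideal_mul_coef Ma Mb) (idealZ (ka * kb) Muu); rewrite subrK.
Qed.

End Ideal.

End BanachAlgebra.

Section Derivations.
Variables (K : numFieldType) (V : normedModType K) (mul : V -> V -> V) (M : set V).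

Lemma inner_derivation_diag D x : inner_derivation mul M D -> M x -> D x x = 0.
Proof. by move=> [f [_ Df]] Mx; rewrite Df // subrr. Qed.

Lemma rank_one_derivation (psi : V -> K) C :
    (forall x y, psi (x + y) = psi x + psi y) -> (forall k x, psi (k *: x) = k * psi x) ->
    (forall x, `|psi x| <= C * `|x|) -> (forall a b, psi (mul a b) = 0) ->
  derivation mul M (fun a x => psi a * psi x).
Proof.
move=> psiD psiZ psi_le psi_mul; split.
- move=> a; split => [x y _ _|k x _|]; first by rewrite psiD mulrDr.
    by rewrite psiZ mulrCA.
  by exists (`|psi a| * C) => x _; rewrite normrM -mulrA ler_wpM2l.
- by move=> a b x _; rewrite psiD mulrDl.
- by move=> k a x _; rewrite psiZ mulrA.
- exists (C * C) => a x _; rewrite normrM -mulrA mulrACA.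
  by apply: ler_pM => //; apply: psi_le.
- by move=> a b x _; rewrite !psi_mul mul0r !mulr0 addr0.
Qed.

End Derivations.

Theorem corollary3p9 (R : realType) (V : completeNormedModType R[i])
    (mul : V -> V -> V) (M : set V) :
  banach_algebra_mul mul ->
  closed_ideal mul M ->
  codim_one M ->
  ~ maximal_modular_ideal mul M ->
  H1_dual_trivial mul M ->
  dense_in (square_span mul) M.
Proof.
move=> bam [idM _] codimM nmax H1.
split; first exact/(square_span_sub idM)/(codim_one_mul_mem bam idM codimM nmax).
move=> x0 Mx0; apply: contrapT => ncl.
have [psi [psiD psiZ psi_le psi0 psix0]] := separation (square_span_subspace bam) ncl.
have psi_mul a b : psi (mul a b) = 0 by apply/psi0/mul_square_span.
have /H1 innerD := rank_one_derivation M psiD psiZ psi_le psi_mul.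
by move/eqP: (inner_derivation_diag innerD Mx0); rewrite mulf_eq0 orbb (negbTE psix0).
Qed.
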